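(* Let $p,q$ be integers with $0<p<q$. There exists a set $A\subseteq\mathbb{N}$ such that $$\sum_{n=0}^N R_A(n)=0.5\frac{p^2}{q^2}N^2+1.5\frac{p^2}{q^2}N+O\big(\sqrt{N}\log^{1/2}N\big)\quad (N\to\infty).$$
   Context: $\mathbb{N}$ denotes the set of non-negative integers. For $A\subseteq\mathbb{N}$, $R_A(n)$ denotes the number of ordered pairs $(a,a')$ with $a,a'\in A$ and $a+a'=n$. *)

From Stdlib Require Import Reals Lra Lia ZArith Arith List.
Open Scope R_scope.

(* R_A(n) = number of ordered pairs (a, a') with a, a' in A and a + a' = n,
   i.e. the number of a in {0,...,n} with a in A and n - a in A. *)
Definition RA (A : nat -> bool) (n : nat) : nat :=
  length (filter (fun a => andb (A a) (A (n - a)%nat)) (seq 0 (S n))).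

(* sum_{n=0}^N R_A(n), as a real number (sum_f_R0 f N = f 0 + ... + f N). *)
Definition sumRA (A : nat -> bool) (N : nat) : R :=
  sum_f_R0 (fun n => INR (RA A n)) N.

From Stdlib Require Import Reals ZArith Lra Lia List.
From Stdlib Require Import IndefiniteDescription.
Open Scope R_scope.

(* The set A is a union of consecutive blocks of length 2q: block K is the cyclic
   window {x < q : (x + u_K) mod q < p} followed by its mirror image, for a shift
   u_K < q.  Each block has 2p elements and is symmetric, so the deviation
   e = 1_A - p/q has zero sum and zero first moment on every block.  Writing
   sum_{n<=N} R_A(n) = sum_{a+b<=N} 1_A(a) 1_A(b) and expanding 1_A = p/q + e gives the
   main term (p/q)^2 (N+1)(N+2)/2, a term linear in e that the moment conditions keep
   bounded, diagonal block terms of which at most one is nonzero, and cross terms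
   between each block and the earlier ones.  The cross term of block K has mean zero
   over the shift u_K, so the shifts can be fixed one at a time by the method of
   conditional expectations, using an exponential-moment pessimistic estimator summed
   over all N with weights 1/((N+1)(N+2)); this keeps every cross sum at
   O(sqrt (N log N)). *)

Fixpoint Rsum (f : nat -> R) (n : nat) : R :=
  match n with O => 0 | S n' => Rsum f n' + f n' end.

Lemma Rsum_S f n : Rsum f (S n) = Rsum f n + f n.
Proof. reflexivity. Qed.

Lemma Rsum_ext f g n : (forall i, (i < n)%nat -> f i = g i) -> Rsum f n = Rsum g n.
Proof.
  induction n as [|n IH]; intros H; simpl; auto.
  rewrite IH by (intros; apply H; lia). rewrite H by lia. reflexivity.
Qed.

Lemma Rsum_plus f g n : Rsum (fun i => f i + g i) n = Rsum f n + Rsum g n.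
Proof. induction n; simpl; [lra | rewrite IHn; lra]. Qed.

Lemma Rsum_minus f g n : Rsum (fun i => f i - g i) n = Rsum f n - Rsum g n.
Proof. induction n; simpl; [lra | rewrite IHn; lra]. Qed.

Lemma Rsum_scal c f n : Rsum (fun i => c * f i) n = c * Rsum f n.
Proof. induction n; simpl; [lra | rewrite IHn; lra]. Qed.

Lemma Rsum_const c n : Rsum (fun _ => c) n = INR n * c.
Proof. induction n; simpl Rsum; [simpl; lra | rewrite IHn, S_INR; lra]. Qed.

Lemma Rsum_eq0 f n : (forall i, (i < n)%nat -> f i = 0) -> Rsum f n = 0.
Proof. intros H. rewrite (Rsum_ext f (fun _ => 0)) by auto. rewrite Rsum_const; lra. Qed.

Lemma Rsum_add f m n : Rsum f (m + n) = Rsum f m + Rsum (fun i => f (m + i)%nat) n.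
Proof.
  induction n; simpl.
  - rewrite Nat.add_0_r; lra.
  - rewrite Nat.add_succ_r; simpl; rewrite IHn; lra.
Qed.

Lemma Rsum_shift f n : Rsum f (S n) = f O + Rsum (fun i => f (S i)) n.
Proof. induction n; simpl; [lra|]. simpl in IHn. rewrite IHn. lra. Qed.

Lemma Rsum_swap (f : nat -> nat -> R) n m :
  Rsum (fun i => Rsum (fun j => f i j) m) n = Rsum (fun j => Rsum (fun i => f i j) n) m.
Proof.
  induction n; simpl.
  - rewrite Rsum_eq0; auto.
  - rewrite IHn, <- Rsum_plus. reflexivity.
Qed.

Lemma Rsum_le f g n : (forall i, (i < n)%nat -> f i <= g i) -> Rsum f n <= Rsum g n.
Proof.
  induction n; intros H; simpl; [lra|].
  assert (Rsum f n <= Rsum g n) by (apply IHn; intros; apply H; lia).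
  assert (f n <= g n) by (apply H; lia). lra.
Qed.

Lemma Rsum_abs_bound f n b :
  (forall i, (i < n)%nat -> Rabs (f i) <= b) -> Rabs (Rsum f n) <= INR n * b.
Proof.
  intros H. rewrite <- Rsum_const.
  induction n; simpl.
  - rewrite Rabs_R0; lra.
  - eapply Rle_trans; [apply Rabs_triang|].
    assert (Rabs (Rsum f n) <= Rsum (fun _ => b) n) by (apply IHn; intros; apply H; lia).
    assert (Rabs (f n) <= b) by (apply H; lia). lra.
Qed.

Lemma Rsum_term_le f n k :
  (forall i, (i < n)%nat -> 0 <= f i) -> (k < n)%nat -> f k <= Rsum f n.
Proof.
  intros H Hk. replace n with (S k + (n - S k))%nat by lia.
  rewrite Rsum_add. simpl.
  assert (0 <= Rsum f k).
  { rewrite <- (Rmult_0_r (INR k)), <- Rsum_const. apply Rsum_le; intros; apply H; lia. }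
  assert (0 <= Rsum (fun i => f (S (k + i))) (n - S k)).
  { rewrite <- (Rmult_0_r (INR (n - S k))), <- Rsum_const. apply Rsum_le; intros; apply H; lia. }
  lra.
Qed.

Lemma Rsum_rev f n : Rsum (fun i => f (n - 1 - i)%nat) n = Rsum f n.
Proof.
  induction n.
  - reflexivity.
  - rewrite Rsum_shift. rewrite (Rsum_ext _ (fun i => f (n - 1 - i)%nat)) by (intros; f_equal; lia).
    rewrite IHn. replace (S n - 1 - 0)%nat with n by lia. simpl. lra.
Qed.

Lemma Rsum_prefix f n d N :
  Rsum (fun a => if (a + d <=? N)%nat then f a else 0) n = Rsum f (Nat.min n (N + 1 - d)).
Proof.
  induction n.
  - reflexivity.
  - rewrite Rsum_S, IHn. destruct (Nat.leb_spec (n + d) N).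
    + rewrite (Nat.min_l (S n)), (Nat.min_l n) by lia. reflexivity.
    + replace (Nat.min (S n) (N + 1 - d)) with (Nat.min n (N + 1 - d)) by lia. lra.
Qed.

Lemma Rsum_single f n k : (forall i, (i < n)%nat -> i <> k -> f i = 0) ->
  Rabs (Rsum f n) <= Rabs (f k).
Proof.
  induction n; intros H; simpl.
  - rewrite Rabs_R0; apply Rabs_pos.
  - destruct (Nat.eq_dec n k).
    + subst. rewrite Rsum_eq0 by (intros; apply H; lia). rewrite Rplus_0_l; lra.
    + rewrite (H n) by lia. rewrite Rplus_0_r. apply IHn. intros; apply H; lia.
Qed.

Lemma Rsum_rot (g : nat -> R) q u : (0 < q)%nat ->
  Rsum (fun x => g ((x + u) mod q)%nat) q = Rsum g q.
Proof.
  intros Hq. induction u.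
  - apply Rsum_ext. intros. rewrite Nat.add_0_r, Nat.mod_small; auto.
  - rewrite <- IHu.
    assert (cyclic : forall G : nat -> R, G q = G O -> Rsum (fun x => G (S x)) q = Rsum G q).
    { intros G HG. destruct q; [lia|]. rewrite (Rsum_shift G), Rsum_S, HG. lra. }
    rewrite <- (cyclic (fun x => g ((x + u) mod q)%nat)).
    + apply Rsum_ext; intros; f_equal; f_equal; lia.
    + simpl. f_equal. replace (q + u)%nat with (u + 1 * q)%nat by lia.
      apply Nat.Div0.mod_add.
Qed.

Lemma Rsum_count p n : Rsum (fun x => if (x <? p)%nat then 1 else 0) n = INR (Nat.min n p).
Proof.
  induction n; simpl Rsum; [reflexivity|]. rewrite IHn.
  destruct (Nat.ltb_spec n p).
  - replace (Nat.min (S n) p) with (S (Nat.min n p)) by lia. rewrite S_INR; lra.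
  - replace (Nat.min (S n) p) with (Nat.min n p) by lia. lra.
Qed.

Lemma exists_le_average (F : nat -> R) n : (0 < n)%nat ->
  exists u, (u < n)%nat /\ INR n * F u <= Rsum F n.
Proof.
  intros Hn.
  assert (Hmin : exists u, (u < n)%nat /\ forall v, (v < n)%nat -> F u <= F v).
  { induction n as [|n IH]; [lia|]. destruct n.
    - exists O. split; auto. intros v Hv. replace v with O by lia. lra.
    - destruct IH as [u [Hu H]]; [lia|].
      destruct (Rle_dec (F u) (F (S n))).
      + exists u. split; [lia|]. intros v Hv.
        destruct (Nat.eq_dec v (S n)); [subst; auto | apply H; lia].
      + exists (S n). split; [lia|]. intros v Hv.
        destruct (Nat.eq_dec v (S n)); [subst; lra|]. pose proof (H v ltac:(lia)). lra. }
  destruct Hmin as [u [Hu H]]. exists u. split; auto.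
  rewrite <- Rsum_const. apply Rsum_le. auto.
Qed.

(** * Triangular sums *)

Definition indic (b : bool) : R := if b then 1 else 0.

Definition tri_sum (f : nat -> nat -> R) (N : nat) : R :=
  Rsum (fun a => Rsum (fun b => f a b) (N + 1 - a)) (N + 1).

Lemma sum_f_R0_Rsum f N : sum_f_R0 f N = Rsum f (S N).
Proof. induction N; simpl; [lra|]. simpl in IHN. rewrite IHN. lra. Qed.

Lemma length_filter_Rsum (g : nat -> bool) k :
  INR (length (filter g (seq 0 k))) = Rsum (fun a => indic (g a)) k.
Proof.
  induction k; [reflexivity|].
  rewrite seq_S, filter_app, length_app, plus_INR, IHk. unfold indic. simpl. destruct (g k); simpl; lra.
Qed.

Lemma Rsum_antidiagonal (f : nat -> nat -> R) N :
  Rsum (fun n => Rsum (fun a => f a (n - a)%nat) (S n)) (S N) = tri_sum f N.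
Proof.
  induction N.
  - unfold tri_sum. simpl. lra.
  - rewrite Rsum_S, IHN. unfold tri_sum.
    replace (S N + 1)%nat with (S (N + 1)) by lia.
    rewrite (Rsum_ext (fun a => Rsum (fun b => f a b) (S (N + 1) - a))
                      (fun a => Rsum (fun b => f a b) (N + 1 - a) + f a (S N - a)%nat)).
    + rewrite Rsum_plus, (Rsum_S (fun a => Rsum (fun b => f a b) (N + 1 - a))).
      replace (N + 1 - (N + 1))%nat with O by lia. replace (N + 1)%nat with (S N) by lia.
      simpl (Rsum _ 0). lra.
    + intros a Ha. replace (S (N + 1) - a)%nat with (S (N + 1 - a)) by lia.
      rewrite Rsum_S. do 3 f_equal. lia.
Qed.

Lemma sumRA_tri_sum A N :
  sumRA A N = tri_sum (fun a b => indic (A a) * indic (A b)) N.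
Proof.
  unfold sumRA. rewrite sum_f_R0_Rsum, <- Rsum_antidiagonal. apply Rsum_ext. intros n Hn.
  unfold RA. rewrite length_filter_Rsum. apply Rsum_ext. intros a Ha.
  unfold indic. destruct (A a), (A (n - a)%nat); simpl; ring.
Qed.

Lemma tri_sum_ext f g N : (forall a b, f a b = g a b) -> tri_sum f N = tri_sum g N.
Proof. intros H. apply Rsum_ext. intros. apply Rsum_ext. auto. Qed.

Lemma tri_sum_plus f g N : tri_sum (fun a b => f a b + g a b) N = tri_sum f N + tri_sum g N.
Proof. unfold tri_sum. rewrite <- Rsum_plus. apply Rsum_ext. intros. apply Rsum_plus. Qed.

Lemma tri_sum_scal c f N : tri_sum (fun a b => c * f a b) N = c * tri_sum f N.
Proof. unfold tri_sum. rewrite <- Rsum_scal. apply Rsum_ext. intros. apply Rsum_scal. Qed.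

Lemma tri_sum_one N : tri_sum (fun _ _ => 1) N = INR (N + 1) * INR (N + 2) / 2.
Proof.
  unfold tri_sum. rewrite (Rsum_ext _ (fun a => INR (N + 1 - a))) by (intros; rewrite Rsum_const; lra).
  rewrite <- Rsum_rev, (Rsum_ext _ (fun i => INR i + 1)).
  - assert (gauss : forall n, Rsum (fun i => INR i + 1) n = INR n * (INR n + 1) / 2).
    { induction n; [simpl; lra|]. rewrite Rsum_S, IHn, S_INR. field. }
    rewrite gauss. replace (N + 2)%nat with (N + 1 + 1)%nat by lia. rewrite (plus_INR (N + 1) 1).
    simpl. lra.
  - intros. rewrite <- S_INR. f_equal. lia.
Qed.

Definition ramp (f : nat -> R) (n : nat) : R := Rsum (fun a => f a * INR (n - a)) n.

Lemma ramp_add f m r :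
  ramp f (m + r) = ramp f m + INR r * Rsum f m + ramp (fun x => f (m + x)%nat) r.
Proof.
  unfold ramp. rewrite Rsum_add.
  rewrite (Rsum_ext (fun a => f a * INR (m + r - a)) (fun a => f a * INR (m - a) + INR r * f a)).
  - rewrite Rsum_plus, Rsum_scal.
    rewrite (Rsum_ext (fun i => f (m + i)%nat * INR (m + r - (m + i)))
                      (fun x => f (m + x)%nat * INR (r - x))).
    + lra.
    + intros. do 2 f_equal. lia.
  - intros i Hi. replace (m + r - i)%nat with (m - i + r)%nat by lia. rewrite plus_INR. ring.
Qed.

Lemma ramp_S f n : ramp f (S n) = ramp f n + Rsum f (S n).
Proof.
  replace (S n) with (n + 1)%nat by lia. rewrite ramp_add.
  unfold ramp at 2. simpl. rewrite Nat.add_0_r. replace (n + 1)%nat with (S n) by lia. simpl. lra.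
Qed.

Lemma tri_sum_left f N : tri_sum (fun a _ => f a) N = ramp f (N + 1).
Proof. apply Rsum_ext. intros. rewrite Rsum_const. ring. Qed.

Lemma tri_sum_right f N : tri_sum (fun _ b => f b) N = ramp f (N + 1).
Proof.
  unfold tri_sum. rewrite <- (Rsum_rev (fun a => Rsum (fun b => f b) (N + 1 - a))).
  rewrite (Rsum_ext _ (fun i => Rsum f (S i))) by (intros; f_equal; lia).
  generalize (N + 1)%nat. intros n. induction n; [reflexivity|].
  rewrite Rsum_S, IHn, ramp_S. reflexivity.
Qed.

Definition pair_sum (f : nat -> R) (n N : nat) : R :=
  Rsum (fun a => Rsum (fun b => if (b + a <=? N)%nat then f a * f b else 0) n) n.

Lemma tri_sum_pair_sum f N n : (N + 1 <= n)%nat ->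
  tri_sum (fun a b => f a * f b) N = pair_sum f n N.
Proof.
  intros Hn. unfold pair_sum, tri_sum.
  rewrite (Rsum_ext (fun a => Rsum _ n) (fun a => Rsum (fun b => f a * f b) (N + 1 - a))).
  - replace n with (N + 1 + (n - (N + 1)))%nat by lia.
    rewrite (Rsum_add _ (N + 1) (n - (N + 1))), (Rsum_eq0 _ (n - (N + 1))); [lra|].
    intros. replace (N + 1 - (N + 1 + i))%nat with O by lia. reflexivity.
  - intros a Ha. rewrite (Rsum_prefix (fun b => f a * f b)). f_equal. lia.
Qed.

Section Blocks.

Variable f : nat -> R.
Variable L : nat.

Definition cross_term (k N : nat) : R :=
  Rsum (fun x => f (k * L + x)%nat *
     Rsum (fun a => if (a + (k * L + x) <=? N)%nat then f a else 0) (k * L)) L.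

Definition diag_term (k N : nat) : R :=
  Rsum (fun x => Rsum (fun y => if ((k * L + y) + (k * L + x) <=? N)%nat
        then f (k * L + x)%nat * f (k * L + y)%nat else 0) L) L.

Lemma pair_sum_step K N :
  pair_sum f (S K * L) N = pair_sum f (K * L) N + 2 * cross_term K N + diag_term K N.
Proof.
  unfold pair_sum, cross_term, diag_term. set (m := (K * L)%nat).
  set (g := fun a b => if (b + a <=? N)%nat then f a * f b else 0).
  replace (S K * L)%nat with (m + L)%nat by (unfold m; lia).
  rewrite Rsum_add.
  rewrite (Rsum_ext (fun a => Rsum (g a) (m + L))
             (fun a => Rsum (g a) m + Rsum (fun y => g a (m + y)%nat) L)) by (intros; apply Rsum_add).
  rewrite (Rsum_ext (fun i => Rsum (g (m + i)%nat) (m + L))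
             (fun x => Rsum (g (m + x)%nat) m + Rsum (fun y => g (m + x)%nat (m + y)%nat) L))
    by (intros; apply Rsum_add).
  rewrite !Rsum_plus, (Rsum_swap (fun a y => g a (m + y)%nat) m L).
  assert (E : forall x, Rsum (fun a => g a (m + x)%nat) m = Rsum (g (m + x)%nat) m).
  { intros x. apply Rsum_ext. intros a Ha. unfold g. rewrite Nat.add_comm.
    destruct (_ <=? N)%nat; ring. }
  rewrite (Rsum_ext (fun j => Rsum (fun i => g i (m + j)%nat) m) _) by (intros; apply E).
  assert (F : forall x, Rsum (g (m + x)%nat) m
     = f (m + x)%nat * Rsum (fun a => if (a + (m + x) <=? N)%nat then f a else 0) m).
  { intros x. rewrite <- Rsum_scal. apply Rsum_ext. intros a Ha. unfold g.
    destruct (_ <=? N)%nat; ring. }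
  rewrite (Rsum_ext (fun x => Rsum (g (m + x)%nat) m) _) by (intros; apply F).
  unfold g. ring.
Qed.

Lemma pair_sum_blocks K N :
  pair_sum f (K * L) N = 2 * Rsum (fun k => cross_term k N) K + Rsum (fun k => diag_term k N) K.
Proof.
  induction K.
  - unfold pair_sum. simpl. lra.
  - rewrite pair_sum_step, IHK, !Rsum_S. ring.
Qed.

End Blocks.

(** * Exponential moments and greedy choices *)

Lemma exp_le_mono x y : x <= y -> exp x <= exp y.
Proof. intros [H|H]; [left; apply exp_increasing; auto | subst; lra]. Qed.

Lemma ln_le_mono x y : 0 < x -> x <= y -> ln x <= ln y.
Proof. intros Hx [H|H]; [left; apply ln_increasing; auto | subst; lra]. Qed.

Lemma exp_le_quadratic y : y <= 1/2 -> exp y <= 1 + y + 2 * y ^ 2.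
Proof.
  intros Hy. pose proof (exp_ineq1_le (- y)).
  replace y with (- - y) at 1 by ring. rewrite exp_Ropp.
  apply Rle_trans with (/ (1 - y)).
  - apply Rinv_le_contravar; lra.
  - apply (Rmult_le_reg_l (1 - y)); [lra|]. rewrite Rinv_r by lra. nra.
Qed.

Lemma Rsum_exp_mean_zero (D : nat -> R) n l c :
  0 <= c -> Rabs l * c <= 1/2 -> Rsum D n = 0 ->
  (forall u, (u < n)%nat -> Rabs (D u) <= c) ->
  Rsum (fun u => exp (l * D u)) n <= INR n * exp (2 * l ^ 2 * c ^ 2).
Proof.
  intros Hc Hl HD HB.
  apply Rle_trans with (Rsum (fun u => 1 + l * D u + 2 * l ^ 2 * c ^ 2) n).
  - apply Rsum_le. intros u Hu. pose proof (HB u Hu).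
    assert (Rabs (l * D u) <= 1/2).
    { rewrite Rabs_mult. pose proof (Rabs_pos l). pose proof (Rabs_pos (D u)). nra. }
    assert ((l * D u) ^ 2 <= l ^ 2 * c ^ 2).
    { rewrite <- (pow2_abs (l * D u)), Rabs_mult, Rpow_mult_distr, pow2_abs.
      apply Rmult_le_compat_l; [nra|]. pose proof (Rabs_pos (D u)). nra. }
    eapply Rle_trans; [apply exp_le_quadratic; pose proof (Rle_abs (l * D u)); lra | lra].
  - rewrite !Rsum_plus, Rsum_scal, HD, !Rsum_const.
    pose proof (exp_ineq1_le (2 * l ^ 2 * c ^ 2)). pose proof (pos_INR n). nra.
Qed.

Definition potential (l c Y : R) (K : nat) : R :=
  exp (l * Y - 2 * l ^ 2 * c ^ 2 * INR K) + exp (- l * Y - 2 * l ^ 2 * c ^ 2 * INR K).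

Lemma potential_pos l c Y K : 0 < potential l c Y K.
Proof.
  unfold potential. pose proof (exp_pos (l * Y - 2 * l ^ 2 * c ^ 2 * INR K)).
  pose proof (exp_pos (- l * Y - 2 * l ^ 2 * c ^ 2 * INR K)). lra.
Qed.

Lemma potential_at_zero l c K : potential l c 0 K <= 2.
Proof.
  unfold potential. replace (l * 0) with 0 by ring. replace (- l * 0) with 0 by ring.
  assert (0 <= 2 * l ^ 2 * c ^ 2 * INR K).
  { pose proof (pos_INR K). pose proof (pow2_ge_0 l). pose proof (pow2_ge_0 c).
    apply Rmult_le_pos; [nra | lra]. }
  assert (exp (0 - 2 * l ^ 2 * c ^ 2 * INR K) <= 1) by (rewrite <- exp_0; apply exp_le_mono; lra).
  lra.
Qed.

(* Averaging over a mean-zero increment bounded by [c] increases the exponent by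
   at most [2 l^2 c^2], which is exactly what the extra [K] in the exponent pays for. *)
Lemma potential_average l c Y K (D : nat -> R) n :
  0 <= c -> Rabs l * c <= 1/2 -> Rsum D n = 0 ->
  (forall u, (u < n)%nat -> Rabs (D u) <= c) ->
  Rsum (fun u => potential l c (Y + D u) (S K)) n <= INR n * potential l c Y K.
Proof.
  intros Hc Hl HD HB. unfold potential.
  set (a := 2 * l ^ 2 * c ^ 2).
  set (E1 := exp (l * Y - a * INR K)). set (E2 := exp (- l * Y - a * INR K)).
  rewrite (Rsum_ext _ (fun u => E1 * exp (- a) * exp (l * D u) + E2 * exp (- a) * exp (- l * D u))).
  2: { intros u Hu. unfold E1, E2. rewrite <- !exp_plus, S_INR. f_equal; f_equal; unfold a; ring. }
  rewrite Rsum_plus, !Rsum_scal.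
  pose proof (Rsum_exp_mean_zero D n l c Hc Hl HD HB) as A1.
  pose proof (Rsum_exp_mean_zero D n (- l) c Hc ltac:(rewrite Rabs_Ropp; lra) HD HB) as A2.
  replace ((- l) ^ 2) with (l ^ 2) in A2 by ring. fold a in A1, A2.
  assert (Ha : exp (- a) * exp a = 1) by (rewrite <- exp_plus, Rplus_opp_l; apply exp_0).
  assert (0 < E1 * exp (- a)) by (apply Rmult_lt_0_compat; apply exp_pos).
  assert (0 < E2 * exp (- a)) by (apply Rmult_lt_0_compat; apply exp_pos).
  apply Rle_trans with (E1 * exp (- a) * (INR n * exp a) + E2 * exp (- a) * (INR n * exp a)).
  - apply Rplus_le_compat; apply Rmult_le_compat_l; lra.
  - replace (E1 * exp (- a) * (INR n * exp a) + E2 * exp (- a) * (INR n * exp a))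
      with (INR n * (E1 + E2) * (exp (- a) * exp a)) by ring.
    rewrite Ha. unfold E1, E2, a. lra.
Qed.

Lemma abs_le_of_potential l c Y K w : 0 <= l -> 0 < w -> w * potential l c Y K <= 2 ->
  l * Rabs Y <= 2 * l ^ 2 * c ^ 2 * INR K + ln (2 / w).
Proof.
  intros Hl Hw H. set (a := 2 * l ^ 2 * c ^ 2 * INR K).
  assert (Hexp : exp (l * Rabs Y - a) <= 2 / w).
  { apply (Rmult_le_reg_l w); auto. unfold Rdiv.
    rewrite <- Rmult_assoc, (Rmult_comm w 2), Rmult_assoc, Rinv_r by lra.
    unfold potential in H. fold a in H.
    pose proof (exp_pos (l * Y - a)). pose proof (exp_pos (- l * Y - a)).
    destruct (Rle_dec 0 Y).
    - rewrite Rabs_right by lra. nra.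
    - rewrite Rabs_left by lra. replace (l * - Y - a) with (- l * Y - a) by ring. nra. }
  apply ln_le_mono in Hexp; [|apply exp_pos]. rewrite ln_exp in Hexp. lra.
Qed.

Definition upd (s : nat -> nat) (K u : nat) : nat -> nat :=
  fun i => if (i =? K)%nat then u else s i.

Lemma upd_lt s K u i : (i < K)%nat -> upd s K u i = s i.
Proof. intros Hi. unfold upd. destruct (Nat.eqb_spec i K); auto; lia. Qed.

Section GreedyChoice.

Variable Phi : (nat -> nat) -> nat -> R.
Hypothesis Phi_prefix : forall s s' K,
  (forall i, (i < K)%nat -> s i = s' i) -> Phi s K = Phi s' K.
Hypothesis Phi_step : forall s K, exists u, Phi (upd s K u) (S K) <= Phi s K.

Let greedy_next s K : nat := proj1_sig (constructive_indefinite_description _ (Phi_step s K)).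

Fixpoint greedy_prefix (K : nat) : nat -> nat :=
  match K with
  | O => fun _ => O
  | S K' => upd (greedy_prefix K') K' (greedy_next (greedy_prefix K') K')
  end.

Lemma greedy_prefix_stable K i : (i < K)%nat -> greedy_prefix K i = greedy_prefix (S i) i.
Proof.
  induction K as [|K IH]; intros Hi; [lia|].
  destruct (Nat.eq_dec i K) as [->|]; [reflexivity|].
  simpl. rewrite upd_lt by lia. apply IH. lia.
Qed.

Lemma greedy_choice : exists s, forall K, Phi s K <= Phi (fun _ => O) O.
Proof.
  exists (fun i => greedy_prefix (S i) i). intros K.
  rewrite (Phi_prefix _ (greedy_prefix K)) by (intros; symmetry; apply greedy_prefix_stable; auto).
  induction K as [|K IH]; [apply Rle_refl|].
  simpl. unfold greedy_next. destruct (constructive_indefinite_description _ _) as [u Hu].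
  simpl. lra.
Qed.

End GreedyChoice.

Definition weight (N : nat) : R := 1 / ((INR N + 1) * (INR N + 2)).

Lemma weight_pos N : 0 < weight N.
Proof. unfold weight. pose proof (pos_INR N). apply Rdiv_lt_0_compat; nra. Qed.

Lemma Rsum_weight_le n : Rsum weight n <= 1.
Proof.
  assert (telescope : Rsum weight n = 1 - 1 / (INR n + 1)).
  { induction n; [simpl; lra|]. rewrite Rsum_S, IHn, S_INR. unfold weight.
    pose proof (pos_INR n). field; lra. }
  rewrite telescope. pose proof (pos_INR n).
  assert (0 < 1 / (INR n + 1)) by (apply Rdiv_lt_0_compat; lra). lra.
Qed.

Definition rate (c : R) (N : nat) : R :=
  sqrt (ln (INR N + 3) * (INR N + 3)) / (2 * c * (INR N + 3)).

Lemma ln_ge1_of_ge3 x : 3 <= x -> 1 <= ln x.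
Proof.
  intros Hx. rewrite <- (ln_exp 1). apply ln_le_mono; [apply exp_pos|]. pose proof exp_le_3. lra.
Qed.

Lemma rate_bounds c N : 0 < c -> 0 < rate c N /\ rate c N * c <= 1/2.
Proof.
  intros Hc. unfold rate. set (X := INR N + 3).
  assert (HX : 3 <= X) by (unfold X; pose proof (pos_INR N); lra).
  pose proof (ln_ge1_of_ge3 X HX).
  assert (Hln : ln X <= X).
  { pose proof (exp_ineq1_le (ln X)) as Hexp. rewrite exp_ln in Hexp by lra. lra. }
  assert (Hs : 0 < sqrt (ln X * X)) by (apply sqrt_lt_R0; nra).
  assert (Hs2 : sqrt (ln X * X) <= X).
  { apply Rle_trans with (sqrt (X * X)); [apply sqrt_le_1_alt; nra | rewrite sqrt_square; lra]. }
  split.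
  - apply Rdiv_lt_0_compat; nra.
  - replace (sqrt (ln X * X) / (2 * c * X) * c) with (sqrt (ln X * X) / (2 * X)) by (field; lra).
    apply (Rmult_le_reg_r (2 * X)); [lra|]. unfold Rdiv. rewrite Rmult_assoc, Rinv_l by lra. lra.
Qed.

(* The choice of [rate] balances the two terms of [abs_le_of_potential]:
   [2 l^2 c^2 K <= ln X / 2] and [ln (2 / weight N) <= 3 ln X], with [X = N + 3]. *)
Lemma abs_le_of_weighted_potential c N K Y : 0 < c -> INR K <= INR N + 3 ->
  weight N * potential (rate c N) c Y K <= 2 ->
  Rabs Y <= 7 * c * sqrt (ln (INR N + 3) * (INR N + 3)).
Proof.
  intros Hc HK H.
  destruct (rate_bounds c N Hc) as [Hl _].
  pose proof (abs_le_of_potential _ _ _ _ _ (Rlt_le _ _ Hl) (weight_pos N) H) as Hb.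
  set (X := INR N + 3) in *. set (l := rate c N) in *.
  assert (HX : 3 <= X) by (unfold X; pose proof (pos_INR N); lra).
  pose proof (ln_ge1_of_ge3 X HX).
  set (Z := sqrt (ln X * X)).
  assert (HZ2 : Z * Z = ln X * X) by (apply sqrt_sqrt; nra).
  assert (HZ : 0 < Z) by (apply sqrt_lt_R0; nra).
  assert (Hl2 : l ^ 2 * c ^ 2 = ln X / (4 * X)).
  { unfold l, rate. fold X Z.
    replace ((Z / (2 * c * X)) ^ 2 * c ^ 2) with (Z * Z / (4 * X * X)) by (field; lra).
    rewrite HZ2. field. lra. }
  assert (Hquad : 2 * l ^ 2 * c ^ 2 * INR K <= ln X / 2).
  { replace (2 * l ^ 2 * c ^ 2 * INR K) with (2 * (l ^ 2 * c ^ 2) * INR K) by ring. rewrite Hl2.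
    apply Rle_trans with (2 * (ln X / (4 * X)) * X).
    - apply Rmult_le_compat_l; [|lra]. apply Rmult_le_pos; [lra|]. apply Rlt_le, Rdiv_lt_0_compat; lra.
    - field_simplify; lra. }
  assert (Hlog : ln (2 / weight N) <= 3 * ln X).
  { apply Rle_trans with (ln (X * (X * X))).
    - apply ln_le_mono.
      + apply Rdiv_lt_0_compat; [lra | apply weight_pos].
      + unfold weight, X. pose proof (pos_INR N).
        replace (2 / (1 / ((INR N + 1) * (INR N + 2))))
          with (2 * ((INR N + 1) * (INR N + 2))) by (field; nra).
        nra.
    - rewrite !ln_mult by nra. lra. }
  assert (Hscale : l * (7 * c * Z) = 7 * ln X / 2).
  { unfold l, rate. fold X Z.
    replace (Z / (2 * c * X) * (7 * c * Z)) with (7 * (Z * Z) / (2 * X)) by (field; lra).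
    rewrite HZ2. field. lra. }
  apply (Rmult_le_reg_l l); auto. rewrite Hscale. lra.
Qed.

Lemma sqrt_ln_shift_le N : (3 <= N)%nat ->
  1 <= sqrt (INR N) * sqrt (ln (INR N)) /\
  sqrt (ln (INR N + 3) * (INR N + 3)) <= 2 * (sqrt (INR N) * sqrt (ln (INR N))).
Proof.
  intros HN. assert (H3 : 3 <= INR N) by (replace 3 with (INR 3) by (simpl; lra); apply le_INR; auto).
  pose proof (ln_ge1_of_ge3 _ H3) as Hl1.
  assert (HS : 0 <= 2 * (sqrt (INR N) * sqrt (ln (INR N)))).
  { pose proof (sqrt_pos (INR N)). pose proof (sqrt_pos (ln (INR N))). nra. }
  split.
  - rewrite <- (Rmult_1_l 1), <- sqrt_1.
    apply Rmult_le_compat; try lra; try (rewrite sqrt_1; lra); apply sqrt_le_1_alt; lra.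
  - rewrite <- (sqrt_pow2 _ HS). apply sqrt_le_1_alt.
    replace ((2 * (sqrt (INR N) * sqrt (ln (INR N)))) ^ 2)
      with (4 * ((sqrt (INR N) * sqrt (INR N)) * (sqrt (ln (INR N)) * sqrt (ln (INR N))))) by ring.
    rewrite !sqrt_sqrt by lra.
    assert (ln (INR N + 3) <= 2 * ln (INR N)).
    { apply Rle_trans with (ln (INR N * INR N)); [apply ln_le_mono; nra | rewrite ln_mult; lra]. }
    assert (0 <= ln (INR N + 3)) by (pose proof (ln_ge1_of_ge3 (INR N + 3)); lra).
    nra.
Qed.

(** * The block set *)

Section BlockSet.

Variables p q : nat.
Hypothesis q_pos : (0 < q)%nat.
Hypothesis p_le_q : (p <= q)%nat.

Local Notation L := (2 * q)%nat.

Definition in_window (u y : nat) : bool := ((y + u) mod q <? p)%nat.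

Definition block_pattern (u x : nat) : bool :=
  if (x <? q)%nat then in_window u x else in_window u (L - 1 - x).

Definition blockset (s : nat -> nat) (a : nat) : bool :=
  block_pattern (s (a / L)%nat) (a mod L).

Definition density : R := INR p / INR q.

Definition dev (s : nat -> nat) (a : nat) : R := indic (blockset s a) - density.

Definition L2 : R := INR L * INR L.

Lemma blockset_block s K x : (x < L)%nat -> blockset s (K * L + x) = block_pattern (s K) x.
Proof.
  intros Hx. unfold blockset.
  rewrite Nat.div_add_l, Nat.div_small, Nat.add_0_r by lia.
  rewrite Nat.add_comm, Nat.Div0.mod_add, Nat.mod_small by lia. reflexivity.
Qed.

Lemma Rsum_in_window u : Rsum (fun y => indic (in_window u y)) q = INR p.
Proof.
  unfold in_window. rewrite (Rsum_rot (fun z => indic (z <? p)%nat) q u q_pos).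
  unfold indic. rewrite Rsum_count. f_equal. lia.
Qed.

Lemma Rsum_block_pattern u : Rsum (fun x => indic (block_pattern u x)) L = 2 * INR p.
Proof.
  replace L with (q + q)%nat by lia. rewrite Rsum_add.
  rewrite (Rsum_ext _ (fun x => indic (in_window u x)))
    by (intros; unfold block_pattern; destruct (Nat.ltb_spec i q); auto; lia).
  rewrite (Rsum_ext (fun i => indic (block_pattern u (q + i)))
                    (fun i => indic (in_window u (q - 1 - i)))).
  - rewrite (Rsum_rev (fun i => indic (in_window u i))), Rsum_in_window. lra.
  - intros i Hi. unfold block_pattern. destruct (Nat.ltb_spec (q + i) q); [lia|]. do 2 f_equal. lia.
Qed.

Lemma Rsum_block_pattern_shifts x : Rsum (fun u => indic (block_pattern u x)) q = INR p.
Proof.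
  assert (swap : forall y, Rsum (fun u => indic (in_window u y)) q = INR p).
  { intros y. rewrite <- (Rsum_in_window y). apply Rsum_ext. intros u _.
    unfold in_window. rewrite Nat.add_comm. reflexivity. }
  unfold block_pattern. destruct (x <? q)%nat; apply swap.
Qed.

Lemma block_pattern_mirror u x : (x < L)%nat -> block_pattern u (L - 1 - x) = block_pattern u x.
Proof.
  intros Hx. unfold block_pattern.
  destruct (Nat.ltb_spec (L - 1 - x) q), (Nat.ltb_spec x q); try lia; f_equal; lia.
Qed.

Lemma density_mul : INR q * density = INR p.
Proof. unfold density. assert (0 < INR q) by (apply lt_0_INR; auto). field. lra. Qed.

Lemma density_bounds : 0 <= density <= 1.
Proof.
  assert (0 < INR q) by (apply lt_0_INR; auto).
  assert (INR p <= INR q) by (apply le_INR; auto). pose proof (pos_INR p).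
  pose proof density_mul. split; nra.
Qed.

Lemma dev_bound s a : Rabs (dev s a) <= 1.
Proof. pose proof density_bounds. unfold dev, indic. destruct (blockset s a); apply Rabs_le; lra. Qed.

Lemma dev_block_sum s K : Rsum (fun x => dev s (K * L + x)) L = 0.
Proof.
  unfold dev. rewrite Rsum_minus.
  rewrite (Rsum_ext _ (fun x => indic (block_pattern (s K) x))) by (intros; rewrite blockset_block; auto).
  rewrite Rsum_block_pattern, Rsum_const, mult_INR. pose proof density_mul. simpl (INR 2). lra.
Qed.

(* The mirror symmetry of a block makes its first moment a multiple of its sum. *)
Lemma dev_block_moment s K : Rsum (fun x => INR x * dev s (K * L + x)) L = 0.
Proof.
  set (g := fun x => INR x * dev s (K * L + x)).
  assert (H : Rsum g L = Rsum (fun x => INR (L - 1) * dev s (K * L + x)) L - Rsum g L).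
  { rewrite <- (Rsum_rev g) at 1. rewrite <- Rsum_minus. apply Rsum_ext. intros i Hi. unfold g.
    assert (E : dev s (K * L + (L - 1 - i)) = dev s (K * L + i)).
    { unfold dev. rewrite !blockset_block, block_pattern_mirror by lia. reflexivity. }
    rewrite E, !minus_INR by lia. ring. }
  rewrite Rsum_scal, dev_block_sum in H. lra.
Qed.

Lemma Rsum_dev_blocks s K : Rsum (dev s) (K * L) = 0.
Proof.
  induction K; [reflexivity|].
  replace (S K * L)%nat with (K * L + L)%nat by lia.
  rewrite Rsum_add, IHK, dev_block_sum. lra.
Qed.

Lemma Rsum_dev_bound s n : Rabs (Rsum (dev s) n) <= INR L.
Proof.
  rewrite (Nat.div_mod_eq n L), Nat.mul_comm, Rsum_add, Rsum_dev_blocks, Rplus_0_l.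
  eapply Rle_trans; [apply Rsum_abs_bound; intros; apply dev_bound|].
  rewrite Rmult_1_r. apply le_INR. pose proof (Nat.mod_upper_bound n L). lia.
Qed.

Lemma ramp_dev_blocks s K : ramp (dev s) (K * L) = 0.
Proof.
  induction K; [reflexivity|].
  replace (S K * L)%nat with (K * L + L)%nat by lia.
  rewrite ramp_add, IHK, Rsum_dev_blocks. unfold ramp.
  rewrite (Rsum_ext _ (fun x => INR L * dev s (K * L + x) - INR x * dev s (K * L + x)))
    by (intros; rewrite minus_INR by lia; ring).
  rewrite Rsum_minus, Rsum_scal, dev_block_sum, dev_block_moment. lra.
Qed.

Lemma ramp_dev_bound s n : Rabs (ramp (dev s) n) <= L2.
Proof.
  pose proof (Nat.mod_upper_bound n L ltac:(lia)).
  rewrite (Nat.div_mod_eq n L), Nat.mul_comm, ramp_add, ramp_dev_blocks, Rsum_dev_blocks.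
  rewrite Rmult_0_r, !Rplus_0_l. unfold L2.
  eapply Rle_trans; [apply Rsum_abs_bound with (b := INR L)|].
  - intros i Hi. rewrite Rabs_mult, (Rabs_right (INR _)) by (apply Rle_ge, pos_INR).
    pose proof (dev_bound s (n / L * L + i)).
    assert (INR (n mod L - i) <= INR L) by (apply le_INR; lia).
    pose proof (pos_INR (n mod L - i)). pose proof (Rabs_pos (dev s (n / L * L + i))). nra.
  - apply Rmult_le_compat_r; [apply pos_INR | apply le_INR; lia].
Qed.

Lemma cross_term_bound s k N : Rabs (cross_term (dev s) L k N) <= L2.
Proof.
  unfold cross_term, L2. apply Rsum_abs_bound. intros x Hx.
  rewrite Rsum_prefix, Rabs_mult.
  pose proof (dev_bound s (k * L + x)).
  pose proof (Rsum_dev_bound s (Nat.min (k * L) (N + 1 - (k * L + x)))).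
  pose proof (Rabs_pos (dev s (k * L + x))).
  pose proof (Rabs_pos (Rsum (dev s) (Nat.min (k * L) (N + 1 - (k * L + x))))).
  nra.
Qed.

Lemma cross_term_eq0 s k N : (2 * (k * L) + L <= N)%nat -> cross_term (dev s) L k N = 0.
Proof.
  intros HN. unfold cross_term. apply Rsum_eq0. intros x Hx.
  rewrite Rsum_prefix, Nat.min_l, Rsum_dev_blocks by lia. ring.
Qed.

Lemma dev_prefix s s' K a : (forall i, (i < K)%nat -> s i = s' i) ->
  (a < K * L)%nat -> dev s a = dev s' a.
Proof.
  intros H Ha. unfold dev, blockset. rewrite H; [reflexivity|].
  apply Nat.Div0.div_lt_upper_bound. lia.
Qed.

Lemma cross_term_prefix s s' k N : (forall i, (i < S k)%nat -> s i = s' i) ->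
  cross_term (dev s) L k N = cross_term (dev s') L k N.
Proof.
  intros H. unfold cross_term. apply Rsum_ext. intros x Hx. f_equal.
  - apply (dev_prefix s s' (S k)); auto. lia.
  - apply Rsum_ext. intros a Ha. destruct (_ <=? N)%nat; auto.
    apply (dev_prefix s s' (S k)); auto. lia.
Qed.

Definition cross_part (s : nat -> nat) (K N : nat) : R :=
  Rsum (fun k => cross_term (dev s) L k N) K.

Lemma cross_part_prefix s s' K N : (forall i, (i < K)%nat -> s i = s' i) ->
  cross_part s K N = cross_part s' K N.
Proof.
  intros H. apply Rsum_ext. intros k Hk. apply cross_term_prefix. intros; apply H; lia.
Qed.

Lemma cross_part_eq0 s K N : ((2 * K + 1) * L <= N)%nat -> cross_part s K N = 0.
Proof.
  intros HN. apply Rsum_eq0. intros k Hk. apply cross_term_eq0.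
  assert (S k * L <= K * L)%nat by (apply Nat.mul_le_mono_r; lia). lia.
Qed.

Lemma cross_part_upd s K u N :
  cross_part (upd s K u) (S K) N = cross_part s K N + cross_term (dev (upd s K u)) L K N.
Proof.
  unfold cross_part. rewrite Rsum_S. f_equal. apply cross_part_prefix.
  intros i Hi. apply upd_lt. auto.
Qed.

(* Block [K] meets the earlier blocks only through their (fixed) prefix sums, and
   over the [q] shifts of block [K] every position has mean deviation zero. *)
Lemma Rsum_cross_term_shifts s K N : Rsum (fun u => cross_term (dev (upd s K u)) L K N) q = 0.
Proof.
  set (P := fun x => Rsum (fun a => if (a + (K * L + x) <=? N)%nat then dev s a else 0) (K * L)).
  rewrite (Rsum_ext _ (fun u => Rsum (fun x => P x * (indic (block_pattern u x) - density)) L)).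
  - rewrite Rsum_swap. apply Rsum_eq0. intros x Hx.
    rewrite Rsum_scal, Rsum_minus, Rsum_block_pattern_shifts, Rsum_const, density_mul. ring.
  - intros u Hu. unfold cross_term. apply Rsum_ext. intros x Hx. rewrite Rmult_comm. f_equal.
    + unfold P. apply Rsum_ext. intros a Ha. destruct (_ <=? N)%nat; auto.
      apply (dev_prefix _ _ K); auto. intros i Hi. apply upd_lt. auto.
    + unfold dev. rewrite blockset_block by auto. unfold upd. rewrite Nat.eqb_refl. reflexivity.
Qed.

Lemma diag_term_eq0_low s k N : (2 * (k * L) + 2 * L <= N + 2)%nat -> diag_term (dev s) L k N = 0.
Proof.
  intros HN. unfold diag_term. apply Rsum_eq0. intros x Hx.
  rewrite <- (Rmult_0_r (dev s (k * L + x))), <- (dev_block_sum s k), <- Rsum_scal.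
  apply Rsum_ext. intros y Hy. destruct (Nat.leb_spec (k * L + y + (k * L + x)) N); [auto | lia].
Qed.

Lemma diag_term_eq0_high s k N : (N < 2 * (k * L))%nat -> diag_term (dev s) L k N = 0.
Proof.
  intros HN. unfold diag_term. apply Rsum_eq0. intros x Hx. apply Rsum_eq0. intros y Hy.
  destruct (Nat.leb_spec (k * L + y + (k * L + x)) N); [lia | auto].
Qed.

Lemma diag_term_bound s k N : Rabs (diag_term (dev s) L k N) <= L2.
Proof.
  unfold diag_term, L2. apply Rsum_abs_bound. intros x Hx.
  rewrite <- (Rmult_1_r (INR L)). apply Rsum_abs_bound. intros y Hy.
  destruct (_ <=? N)%nat; [|rewrite Rabs_R0; lra].
  rewrite Rabs_mult. pose proof (dev_bound s (k * L + x)). pose proof (dev_bound s (k * L + y)).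
  pose proof (Rabs_pos (dev s (k * L + x))). pose proof (Rabs_pos (dev s (k * L + y))). nra.
Qed.

(* Only the block [k0] whose square straddles [N] contributes: lower blocks are
   complete, hence sum to zero, and higher ones lie beyond [N]. *)
Lemma Rsum_diag_term_bound s K N : Rabs (Rsum (fun k => diag_term (dev s) L k N) K) <= L2.
Proof.
  set (k0 := (N / (2 * L))%nat).
  pose proof (Nat.div_mod N (2 * L) ltac:(lia)). pose proof (Nat.mod_upper_bound N (2 * L) ltac:(lia)).
  eapply Rle_trans; [apply (Rsum_single _ K k0) | apply diag_term_bound].
  intros k Hk Hne. destruct (Nat.lt_ge_cases k k0).
  - apply diag_term_eq0_low.
    assert (S k * (2 * L) <= k0 * (2 * L))%nat by (apply Nat.mul_le_mono_r; lia). nia.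
  - apply diag_term_eq0_high.
    assert (S k0 * (2 * L) <= k * (2 * L))%nat by (apply Nat.mul_le_mono_r; lia). nia.
Qed.

Lemma sumRA_blockset s N K : (N < K * L)%nat ->
  sumRA (blockset s) N = density ^ 2 * (INR (N + 1) * INR (N + 2) / 2)
    + 2 * density * ramp (dev s) (N + 1) + 2 * cross_part s K N
    + Rsum (fun k => diag_term (dev s) L k N) K.
Proof.
  intros HN. rewrite sumRA_tri_sum.
  rewrite (tri_sum_ext _ (fun a b => (density ^ 2 * 1 + density * dev s b) + density * dev s a
                                     + dev s a * dev s b)) by (intros; unfold dev; ring).
  rewrite !tri_sum_plus, !tri_sum_scal, tri_sum_one, tri_sum_left, tri_sum_right.
  rewrite (tri_sum_pair_sum _ N (K * L)), pair_sum_blocks by lia.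
  unfold cross_part. ring.
Qed.

Lemma L2_pos : 0 < L2.
Proof. unfold L2. assert (0 < INR L) by (apply lt_0_INR; lia). nra. Qed.

Definition horizon (K : nat) : nat := ((2 * K + 1) * L)%nat.

(* Pessimistic estimator for the event that some [cross_part s K N] is large; the
   terms with [N >= horizon K] are omitted since there [cross_part s K N = 0]. *)
Definition estimator (s : nat -> nat) (K : nat) : R :=
  Rsum (fun N => weight N * potential (rate L2 N) L2 (cross_part s K N) K) (horizon K).

Lemma estimator_prefix s s' K : (forall i, (i < K)%nat -> s i = s' i) ->
  estimator s K = estimator s' K.
Proof.
  intros H. apply Rsum_ext. intros N HN. rewrite (cross_part_prefix s s' K N H). reflexivity.
Qed.

Lemma estimator_zero s : estimator s 0 <= 2 * Rsum weight (horizon 0).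
Proof.
  rewrite <- Rsum_scal. apply Rsum_le. intros N HN. pose proof (weight_pos N).
  pose proof (potential_at_zero (rate L2 N) L2 0). unfold cross_part. simpl Rsum. nra.
Qed.

Lemma potential_cross_part_shifts s K N :
  Rsum (fun u => potential (rate L2 N) L2 (cross_part (upd s K u) (S K) N) (S K)) q
  <= INR q * potential (rate L2 N) L2 (cross_part s K N) K.
Proof.
  destruct (rate_bounds L2 N L2_pos) as [Hl Hlc].
  rewrite (Rsum_ext _ (fun u => potential (rate L2 N) L2
             (cross_part s K N + cross_term (dev (upd s K u)) L K N) (S K)))
    by (intros; rewrite cross_part_upd; reflexivity).
  apply potential_average.
  - apply Rlt_le, L2_pos.
  - rewrite Rabs_right; lra.
  - apply Rsum_cross_term_shifts.
  - intros. apply cross_term_bound.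
Qed.

Lemma estimator_extend s K :
  Rsum (fun N => weight N * potential (rate L2 N) L2 (cross_part s K N) K) (horizon (S K))
  <= estimator s K + 2 * (Rsum weight (horizon (S K)) - Rsum weight (horizon K)).
Proof.
  unfold estimator. replace (horizon (S K)) with (horizon K + L * 2)%nat by (unfold horizon; lia).
  rewrite !Rsum_add.
  assert (Htail : forall i, (i < L * 2)%nat ->
    weight (horizon K + i) * potential (rate L2 (horizon K + i)) L2 (cross_part s K (horizon K + i)) K
    <= 2 * weight (horizon K + i)).
  { intros i Hi. rewrite cross_part_eq0 by (unfold horizon; lia).
    pose proof (weight_pos (horizon K + i)).
    pose proof (potential_at_zero (rate L2 (horizon K + i)) L2 K). nra. }
  apply Rsum_le in Htail. rewrite Rsum_scal in Htail. lra.
Qed.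

Lemma estimator_step s K : exists u,
  estimator (upd s K u) (S K) - 2 * Rsum weight (horizon (S K))
  <= estimator s K - 2 * Rsum weight (horizon K).
Proof.
  destruct (exists_le_average (fun u => estimator (upd s K u) (S K)) q q_pos) as [u [_ Hu]].
  exists u.
  assert (Hsum : Rsum (fun u => estimator (upd s K u) (S K)) q
    <= INR q * Rsum (fun N => weight N * potential (rate L2 N) L2 (cross_part s K N) K) (horizon (S K))).
  { unfold estimator. rewrite Rsum_swap, <- Rsum_scal. apply Rsum_le. intros N HN.
    rewrite Rsum_scal. pose proof (weight_pos N). pose proof (potential_cross_part_shifts s K N). nra. }
  pose proof (estimator_extend s K).
  assert (0 < INR q) by (apply lt_0_INR; auto).
  apply (Rmult_le_reg_l (INR q)); auto. nra.
Qed.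

Lemma exists_good_shifts : exists s, forall K, estimator s K <= 2.
Proof.
  destruct (greedy_choice (fun s K => estimator s K - 2 * Rsum weight (horizon K))) as [s Hs].
  - intros s s' K H. rewrite (estimator_prefix s s' K H). reflexivity.
  - apply estimator_step.
  - exists s. intros K. pose proof (Hs K). pose proof (estimator_zero (fun _ => O)).
    pose proof (Rsum_weight_le (horizon K)). lra.
Qed.

Lemma cross_part_bound s N : (forall K, estimator s K <= 2) ->
  Rabs (cross_part s (S (N / L)) N) <= 7 * L2 * sqrt (ln (INR N + 3) * (INR N + 3)).
Proof.
  intros Hs. set (K := S (N / L)).
  pose proof (Nat.div_mod N L ltac:(lia)). pose proof (Nat.mod_upper_bound N L ltac:(lia)).
  apply abs_le_of_weighted_potential with K; [apply L2_pos | |].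
  - assert (N / L <= N)%nat by (apply Nat.Div0.div_le_upper_bound; nia).
    apply le_INR in H1. unfold K. rewrite S_INR. lra.
  - eapply Rle_trans; [|apply (Hs K)]. unfold estimator.
    apply (Rsum_term_le (fun N => weight N * potential (rate L2 N) L2 (cross_part s K N) K)).
    + intros. pose proof (weight_pos i).
      pose proof (potential_pos (rate L2 i) L2 (cross_part s K i) K). nra.
    + unfold horizon, K. nia.
Qed.

Lemma sumRA_blockset_error s : (forall K, estimator s K <= 2) -> forall N, (3 <= N)%nat ->
  Rabs (sumRA (blockset s) N - ((1/2) * density ^ 2 * INR N ^ 2 + (3/2) * density ^ 2 * INR N))
  <= (1 + 31 * L2) * (sqrt (INR N) * sqrt (ln (INR N))).
Proof.
  intros Hs N HN. set (K := S (N / L)).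
  rewrite (sumRA_blockset s N K)
    by (pose proof (Nat.div_mod N L ltac:(lia));
        pose proof (Nat.mod_upper_bound N L ltac:(lia)); unfold K; nia).
  set (W := ramp (dev s) (N + 1)). set (Y := cross_part s K N).
  set (D := Rsum (fun k => diag_term (dev s) L k N) K).
  match goal with |- Rabs ?e <= _ =>
    replace e with (density ^ 2 + 2 * density * W + 2 * Y + D)
      by (rewrite !plus_INR; simpl (INR 1); simpl (INR 2); field) end.
  pose proof (ramp_dev_bound s (N + 1)) as HW. pose proof (cross_part_bound s N Hs) as HY.
  pose proof (Rsum_diag_term_bound s K N) as HD. destruct density_bounds as [Hd0 Hd1].
  pose proof L2_pos.
  destruct (sqrt_ln_shift_le N HN) as [HS1 HS2].
  fold W in HW. fold D in HD. fold K Y in HY. set (S0 := sqrt (INR N) * sqrt (ln (INR N))) in *.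
  set (Z0 := sqrt (ln (INR N + 3) * (INR N + 3))) in *.
  pose proof (Rabs_pos W). pose proof (Rabs_pos Y). pose proof (sqrt_pos (INR N)).
  eapply Rle_trans; [apply Rabs_4|].
  rewrite !Rabs_mult, <- RPow_abs, (Rabs_right 2), (Rabs_right density) by lra.
  assert (L2 <= L2 * S0) by nra.
  assert (density ^ 2 <= 1) by nra.
  assert (density * Rabs W <= L2) by nra.
  assert (Rabs Y <= 14 * L2 * S0) by nra.
  lra.
Qed.

End BlockSet.

Theorem theorem6 (p q : Z) (hp : (0 < p)%Z) (hpq : (p < q)%Z) :
  exists A : nat -> bool, exists C : R, exists N0 : nat,
    forall N : nat, (N0 <= N)%nat ->
      Rabs (sumRA A N
            - ((1/2) * (IZR p ^ 2 / IZR q ^ 2) * INR N ^ 2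
               + (3/2) * (IZR p ^ 2 / IZR q ^ 2) * INR N))
      <= C * (sqrt (INR N) * sqrt (ln (INR N))).
Proof.
  assert (Hq : (0 < Z.to_nat q)%nat) by lia.
  assert (Hp : (Z.to_nat p <= Z.to_nat q)%nat) by lia.
  assert (Hdensity : IZR p ^ 2 / IZR q ^ 2 = density (Z.to_nat p) (Z.to_nat q) ^ 2).
  { unfold density. rewrite !INR_IZR_INZ, !Z2Nat.id by lia.
    field. apply not_0_IZR. lia. }
  destruct (exists_good_shifts _ _ Hq Hp) as [s Hs].
  exists (blockset (Z.to_nat p) (Z.to_nat q) s), (1 + 31 * L2 (Z.to_nat q)), 3%nat.
  intros N HN. rewrite Hdensity. apply sumRA_blockset_error; auto.
Qed.
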